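(* The following are equivalent for an integral domain $D$: (1) for every nonzero nonunit $x$ of $D$, $xD$ is a $\ast$-product of finitely many $\ast$-super homog ideals of type $1$; (2) $D$ is a $\ast$-GKD.
   Context: $\ast$ is a star operation on $D$ of finite character. A $\ast$-ideal is a nonzero fractional ideal $I$ with $I^\ast=I$; of finite type if $I=J^\ast$ for some nonzero finitely generated $J$. A maximal $\ast$-ideal is an integral $\ast$-ideal maximal among proper integral $\ast$-ideals. $I$ is $\ast$-invertible if $(II^{-1})^\ast=D$. A $\ast$-homog ideal is a proper integral $\ast$-ideal $I$ of finite type such that $(A+B)^\ast\neq D$ for every pair $A,B$ of proper integral $\ast$-ideals of finite type containing $I$; it lies in a unique maximal $\ast$-ideal $M(I)$. A $\ast$-homog ideal $I$ is of type $1$ if for every $x\in M(I)\setminus\{0\}$ there is $n\ge1$ with $x^nD_{M(I)}\cap D\subseteq I$. A $\ast$-super homog ideal is a $\ast$-homog ideal $I$ such that every $\ast$-ideal of finite type containing $I$ is $\ast$-invertible; it is of type $1$ if it is also a $\ast$-homog ideal of type $1$. $D$ is a $\ast$-IRKT if $D_P$ is a valuation domain for every maximal $\ast$-ideal $P$, $D=\bigcap_P D_P$ over the maximal $\ast$-ideals with the intersection locally finite, and no two distinct maximal $\ast$-ideals contain a common nonzero prime ideal. $D$ is a $\ast$-GKD if it is a $\ast$-IRKT all of whose maximal $\ast$-ideals have height $1$. *)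

(* An integral domain D is represented as a subring of a
   field K which is its field of fractions; fractional ideals are subsets
   (K -> Prop) of K. *)
From HB Require Import structures.
From mathcomp Require Import all_boot all_order all_algebra.
Set Implicit Arguments.
Unset Strict Implicit.
Unset Printing Implicit Defensive.
Import Order.TTheory GRing.Theory Num.Theory.
Local Open Scope ring_scope.

Section StarDefs.
Variable K : fieldType.
Variable D : K -> Prop.

Definition subset_K (A B : K -> Prop) : Prop := forall x, A x -> B x.

Definition is_subring : Prop :=
  [/\ D 0, D 1, (forall a b, D a -> D b -> D (a - b))
    & (forall a b, D a -> D b -> D (a * b))].

Definition is_frac_field : Prop :=
  forall x : K, exists a b, [/\ D a, D b, b != 0 & x = a / b].

Definition is_Dsubmodule (I : K -> Prop) : Prop :=
  [/\ I 0, (forall x y, I x -> I y -> I (x + y))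
    & (forall a x, D a -> I x -> I (a * x))].

Definition frac_ideal (I : K -> Prop) : Prop :=
  [/\ is_Dsubmodule I, (exists x, x != 0 /\ I x)
    & (exists d, [/\ D d, d != 0 & forall x, I x -> D (d * x)])].

Fixpoint gen (s : seq K) (x : K) : Prop :=
  match s with
  | [::] => x = 0
  | a :: s' => exists d y, [/\ D d, gen s' y & x = d * a + y]
  end.

Definition fin_gen (I : K -> Prop) : Prop := exists s : seq K, I = gen s.

Definition mulset (x : K) (I : K -> Prop) : K -> Prop :=
  fun y => exists z, I z /\ y = x * z.

Definition principal (x : K) : K -> Prop := fun y => exists d, D d /\ y = d * x.

Definition sumI (A B : K -> Prop) : K -> Prop :=
  fun x => exists a b, [/\ A a, B b & x = a + b].

Definition mulI (A B : K -> Prop) : K -> Prop :=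
  fun x => exists s : seq (K * K),
    (forall p, p \in s -> A p.1 /\ B p.2) /\ x = \sum_(p <- s) p.1 * p.2.

Definition inv_ideal (I : K -> Prop) : K -> Prop :=
  fun x => forall y, I y -> D (x * y).

(* star operation on D (values outside F(D) are irrelevant) *)
Definition is_star_op (star : (K -> Prop) -> (K -> Prop)) : Prop :=
  (forall I, frac_ideal I -> frac_ideal (star I)) /\
  [/\ star D = D,
      (forall x I, x != 0 -> frac_ideal I -> star (mulset x I) = mulset x (star I)),
      (forall I, frac_ideal I -> subset_K I (star I)),
      (forall I J, frac_ideal I -> frac_ideal J -> subset_K I J ->
                   subset_K (star I) (star J))
    & (forall I, frac_ideal I -> star (star I) = star I)].

Definition finite_character (star : (K -> Prop) -> (K -> Prop)) : Prop :=
  forall I, frac_ideal I ->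
    star I = (fun x => exists J, [/\ frac_ideal J, fin_gen J, subset_K J I & star J x]).

Variable star : (K -> Prop) -> (K -> Prop).

Definition star_ideal (I : K -> Prop) : Prop := frac_ideal I /\ star I = I.

Definition integral (I : K -> Prop) : Prop := subset_K I D.

Definition proper_integral_star_ideal (I : K -> Prop) : Prop :=
  [/\ star_ideal I, integral I & I <> D].

Definition finite_type (I : K -> Prop) : Prop :=
  star_ideal I /\ exists J, [/\ frac_ideal J, fin_gen J & I = star J].

Definition max_star_ideal (M : K -> Prop) : Prop :=
  proper_integral_star_ideal M /\
  forall N, proper_integral_star_ideal N -> subset_K M N -> N = M.

Definition star_invertible (I : K -> Prop) : Prop :=
  star (mulI I (inv_ideal I)) = D.

Definition loc (P : K -> Prop) : K -> Prop :=
  fun x => exists a s, [/\ D a, D s, ~ P s & x = a / s].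

Definition star_homog (I : K -> Prop) : Prop :=
  [/\ proper_integral_star_ideal I, finite_type I &
      forall A B, proper_integral_star_ideal A -> finite_type A ->
                  proper_integral_star_ideal B -> finite_type B ->
                  subset_K I A -> subset_K I B -> star (sumI A B) <> D].

(* type 1; M(I) is the unique maximal star-ideal containing I *)
Definition star_homog_type1 (I : K -> Prop) : Prop :=
  star_homog I /\
  forall M, max_star_ideal M -> subset_K I M ->
    forall x, M x -> x != 0 -> exists n : nat, (1 <= n)%N /\
      forall y, D y -> (exists z, loc M z /\ y = x ^+ n * z) -> I y.

Definition star_super_homog (I : K -> Prop) : Prop :=
  star_homog I /\
  forall J, finite_type J -> subset_K I J -> star_invertible J.

Definition star_super_homog_type1 (I : K -> Prop) : Prop :=
  star_super_homog I /\ star_homog_type1 I.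

Definition prodI (s : seq (K -> Prop)) : K -> Prop := foldr mulI D s.

Definition prime_ideal (Q : K -> Prop) : Prop :=
  [/\ is_Dsubmodule Q, integral Q, ~ Q 1 &
      forall a b, D a -> D b -> Q (a * b) -> Q a \/ Q b].

Definition nonzero_set (Q : K -> Prop) : Prop := exists x, x != 0 /\ Q x.

Definition star_IRKT : Prop :=
  [/\ (forall P, max_star_ideal P ->
         forall x : K, x != 0 -> loc P x \/ loc P x^-1),
      (forall x, D x <-> forall P, max_star_ideal P -> loc P x),
      (forall x, D x -> x != 0 -> exists (n : nat) (f : nat -> K -> Prop),
         forall P, max_star_ideal P -> P x -> exists i, (i < n)%N /\ P = f i)
    & (forall P Q, max_star_ideal P -> max_star_ideal Q -> P <> Q ->
         forall R, prime_ideal R -> nonzero_set R ->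
           ~ (subset_K R P /\ subset_K R Q))].

(* height 1: every nonzero prime contained in P equals P *)
Definition star_GKD : Prop :=
  star_IRKT /\
  forall P, max_star_ideal P ->
    forall Q, prime_ideal Q -> nonzero_set Q -> subset_K Q P -> Q = P.

End StarDefs.

(* A star-homogeneous ideal lies in a unique maximal star-ideal M, and a super
   homogeneous one is locally principal at M, with a local generator comparable in
   D_M with every element: adjoin the element to the generators, which gives another
   invertible ideal, and compare the local generators.  So if every xD is a
   star-product of such ideals, every D_P is a valuation ring, type 1 makes P
   minimal over each factor inside P (height one), and the maximal star-ideals
   containing x are those above its finitely many factors.
   Conversely, in a star-GKD a nonzero nonunit x lies in finitely many maximal
   star-ideals P_1, ..., P_m, and since D_(P_i) is a valuation ring of height one,
   a power of any c in P_i \ P_j lies in x D_(P_i).  Adjoining such powers to x gives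
   ideals I_i of finite type that are super homogeneous of type 1 with M(I_i) = P_i,
   and xD = (I_1 ... I_m)^* is checked locally at every maximal star-ideal. *)

From HB Require Import structures.
From mathcomp Require Import all_boot all_order all_algebra.
From mathcomp Require Import ring zify boolp.
From mathcomp Require classical_sets.
Import GRing.Theory.
Local Open Scope ring_scope.
Set Implicit Arguments.
Unset Strict Implicit.

Lemma chain_seq_bound (T : eqType) (F : (T -> Prop) -> Prop) X0 : F X0 ->
  (forall X Y, F X -> F Y -> (forall t, X t -> Y t) \/ (forall t, Y t -> X t)) ->
  forall s : seq T, (forall a, a \in s -> exists2 X, F X & X a) ->
  exists2 X, F X & forall a, a \in s -> X a.
Proof.
move=> FX0 Ftot; elim=> [|a s IH] sF; first by exists X0.
have [X FX sX] : exists2 X, F X & forall b, b \in s -> X b.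
  by apply: IH => b sb; apply: sF; rewrite inE sb orbT.
have [Y FY Ya] := sF a (mem_head _ _).
case: (Ftot X Y FX FY) => [XY|YX].
  by exists Y => // b; rewrite inE => /predU1P [->|/sX /XY].
by exists X => // b; rewrite inE => /predU1P [->|/sX //]; apply: YX.
Qed.

Section StarGKD.
Variable K : fieldType.
Variable D : K -> Prop.
Variable star : (K -> Prop) -> (K -> Prop).
Hypothesis subringD : is_subring D.
Hypothesis fracK : is_frac_field D.
Hypothesis starP : is_star_op D star.
Hypothesis star_fin : finite_character D star.

Local Notation submod := (is_Dsubmodule D).
Local Notation frac := (frac_ideal D).
Local Notation maxs := (max_star_ideal D star).
Local Notation pis := (proper_integral_star_ideal D star).

Lemma D0 : D 0. Proof. by case: subringD. Qed.
Lemma D1 : D 1. Proof. by case: subringD. Qed.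
Lemma DB a b : D a -> D b -> D (a - b). Proof. by case: subringD => _ _ h _; apply: h. Qed.
Lemma DM a b : D a -> D b -> D (a * b). Proof. by case: subringD => _ _ _ h; apply: h. Qed.
Lemma DN a : D a -> D (- a). Proof. by move=> Da; rewrite -sub0r; apply: DB D0 Da. Qed.
Lemma DD a b : D a -> D b -> D (a + b).
Proof. by move=> Da Db; rewrite -(opprK b); apply: DB Da (DN Db). Qed.
Lemma DX a n : D a -> D (a ^+ n).
Proof. by move=> Da; elim: n => [|n IH]; rewrite ?expr0 ?exprS; [exact: D1|apply: DM]. Qed.

Lemma submod0 A : submod A -> A 0. Proof. by case. Qed.
Lemma submodD A x y : submod A -> A x -> A y -> A (x + y). Proof. by case=> _ h _; apply: h. Qed.
Lemma submodM A a x : submod A -> D a -> A x -> A (a * x). Proof. by case=> _ _ h; apply: h. Qed.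
Lemma submodMr A a x : submod A -> D a -> A x -> A (x * a).
Proof. by move=> hA Da Ax; rewrite mulrC; apply: submodM. Qed.

Lemma submod_D : submod D. Proof. by split; [exact: D0|exact: DD|exact: DM]. Qed.

Lemma submod_scale g A : submod A -> submod (fun t => A (g * t)).
Proof.
move=> hA; split; first by rewrite mulr0; exact: submod0.
  by move=> u v Au Av; rewrite mulrDr; apply: submodD.
by move=> a u Da Au; rewrite mulrCA; apply: submodM.
Qed.

Lemma submod_eqD A : submod A -> subset_K A D -> A 1 -> A = D.
Proof.
move=> hA sA A1; rewrite predeqE => x; split=> [/sA //|Dx].
by rewrite -(mulr1 x); apply: submodM.
Qed.

Lemma frac_submod A : frac A -> submod A. Proof. by case. Qed.
Lemma frac_nonzero A : frac A -> nonzero_set A. Proof. by case. Qed.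

Lemma frac_integral A : submod A -> subset_K A D -> nonzero_set A -> frac A.
Proof.
move=> hA sA nzA; split=> //; exists 1.
by split=> [|//|x /sA]; [exact: D1|exact: oner_neq0|rewrite mul1r].
Qed.

Lemma frac_D : frac D.
Proof. by apply: frac_integral; [exact: submod_D| |exists 1; split; [exact: oner_neq0|exact: D1]]. Qed.

Lemma star_frac A : frac A -> frac (star A). Proof. by case: starP => h _; apply: h. Qed.
Lemma starD : star D = D. Proof. by case: starP => _ []. Qed.
Lemma star_mulset x A : x != 0 -> frac A -> star (mulset x A) = mulset x (star A).
Proof. by case: starP => _ [] _ h _ _ _; apply: h. Qed.
Lemma star_ext A : frac A -> subset_K A (star A).
Proof. by case: starP => _ [] _ _ h _ _; apply: h. Qed.
Lemma star_mono A B : frac A -> frac B -> subset_K A B -> subset_K (star A) (star B).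
Proof. by case: starP => _ [] _ _ _ h _; apply: h. Qed.
Lemma star_idem A : frac A -> star (star A) = star A.
Proof. by case: starP => _ [] _ _ _ _ h; apply: h. Qed.
Lemma star_submod A : frac A -> submod (star A). Proof. by move/star_frac/frac_submod. Qed.
Lemma star_integral A : frac A -> subset_K A D -> subset_K (star A) D.
Proof. by move=> fA sA; rewrite -starD; apply: star_mono => //; exact: frac_D. Qed.

Lemma frac_mulset g A : g != 0 -> frac A ->
  (exists d, [/\ D d, d != 0 & forall y, A y -> D (d * (g * y))]) -> frac (mulset g A).
Proof.
move=> g0 [[A0 AD AM] [x [x0 Ax]] _] [d [Dd d0 hd]]; split.
- split; first by exists 0; rewrite mulr0.
  + move=> _ _ [a [Aa ->]] [b [Ab ->]]; exists (a + b).
    by split; [exact: AD|rewrite mulrDr].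
  + move=> c _ Dc [a [Aa ->]]; exists (c * a).
    by split; [exact: AM|rewrite mulrCA].
- by exists (g * x); split; [rewrite mulf_neq0|exists x].
- by exists d; split=> // _ [a [Aa ->]]; apply: hd.
Qed.

(* Multiplying by [g] commutes with [star], so [g A ⊆ C] passes to [g A^* ⊆ C^* = C]. *)
Lemma star_mul_sub g A C : g != 0 -> frac A -> frac C -> star C = C ->
  (forall y, A y -> C (g * y)) -> forall y, star A y -> C (g * y).
Proof.
move=> g0 fA fC SC gAC y Ay.
have fgA : frac (mulset g A).
  apply: frac_mulset => //; case: fC => _ _ [d [Dd d0 hd]].
  by exists d; split=> // z /gAC /hd.
have : mulset g (star A) (g * y) by exists y.
rewrite -star_mulset // -SC; apply: star_mono => //.
by move=> _ [z [Az ->]]; apply: gAC.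
Qed.

Lemma pisP A : pis A <-> [/\ frac A, star A = A, subset_K A D & ~ A 1].
Proof.
split=> [[[fA SA] sA AD]|[fA SA sA nA]].
  by split=> // A1; apply/AD/submod_eqD => //; exact: frac_submod.
by split=> // AD; apply: nA; rewrite AD; exact: D1.
Qed.

Lemma max_star_props P : maxs P -> [/\ frac P, star P = P, subset_K P D & ~ P 1].
Proof. by case=> /pisP. Qed.

Lemma max_star_maximal P N : maxs P -> pis N -> subset_K P N -> N = P.
Proof. by case=> _; apply. Qed.

(** * Operations on ideals *)

Lemma sumI_submod A B : submod A -> submod B -> submod (sumI A B).
Proof.
move=> hA hB; split.
- by exists 0, 0; split; [exact: submod0|exact: submod0|rewrite addr0].
- move=> _ _ [a [b [Aa Bb ->]]] [a' [b' [Aa' Bb' ->]]].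
  by exists (a + a'), (b + b'); split; [exact: submodD|exact: submodD|rewrite addrACA].
- move=> d _ Dd [a [b [Aa Bb ->]]]; exists (d * a), (d * b).
  by split; [exact: submodM|exact: submodM|rewrite mulrDr].
Qed.

Lemma sumI_integral A B : subset_K A D -> subset_K B D -> subset_K (sumI A B) D.
Proof. by move=> sA sB _ [a [b [/sA Da /sB Db ->]]]; apply: DD. Qed.

Lemma sumI_subl A B : submod B -> subset_K A (sumI A B).
Proof. by move=> hB a Aa; exists a, 0; split=> //; [exact: submod0|rewrite addr0]. Qed.
Lemma sumI_subr A B : submod A -> subset_K B (sumI A B).
Proof. by move=> hA b Bb; exists 0, b; split=> //; [exact: submod0|rewrite add0r]. Qed.

Lemma sumI_frac A B : frac A -> submod B -> subset_K A D -> subset_K B D -> frac (sumI A B).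
Proof.
move=> fA hB sA sB; apply: frac_integral.
- by apply: sumI_submod => //; exact: frac_submod.
- exact: sumI_integral.
- by have [x [x0 Ax]] := frac_nonzero fA; exists x; split=> //; apply: sumI_subl.
Qed.

Lemma principal_submod x : submod (principal D x).
Proof.
split; first by exists 0; split; [exact: D0|rewrite mul0r].
- move=> _ _ [a [Da ->]] [b [Db ->]].
  by exists (a + b); split; [exact: DD|rewrite mulrDl].
- by move=> c _ Dc [a [Da ->]]; exists (c * a); split; [exact: DM|rewrite mulrA].
Qed.

Lemma principal_self x : principal D x x.
Proof. by exists 1; split; [exact: D1|rewrite mul1r]. Qed.

Lemma principal_integral x : D x -> subset_K (principal D x) D.
Proof. by move=> Dx _ [a [Da ->]]; apply: DM. Qed.

Lemma principal_frac x : D x -> x != 0 -> frac (principal D x).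
Proof.
move=> Dx x0; apply: frac_integral; [exact: principal_submod|exact: principal_integral|].
by exists x; split=> //; exact: principal_self.
Qed.

Lemma star_principal x : D x -> x != 0 -> star (principal D x) = principal D x.
Proof.
move=> Dx x0; have -> : principal D x = mulset x D.
  by rewrite predeqE => y; split=> -[d [Dd ->]]; exists d; rewrite mulrC.
by rewrite star_mulset ?starD //; exact: frac_D.
Qed.

Lemma gen_submod s : submod (gen D s).
Proof.
elim: s => [|a s [h0 hD hM]] /=.
  by split=> // [x y -> ->|c x _ ->]; rewrite ?addr0 ?mulr0.
split; first by exists 0, 0; split=> //; [exact: D0|rewrite mul0r addr0].
- move=> _ _ [d [y [Dd gy ->]]] [d' [y' [Dd' gy' ->]]].
  exists (d + d'), (y + y'); split; [exact: DD|exact: hD|].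
  by rewrite mulrDl addrACA.
- move=> c _ Dc [d [y [Dd gy ->]]]; exists (c * d), (c * y).
  by split; [exact: DM|exact: hM|rewrite mulrDr mulrA].
Qed.

Lemma gen_mem s a : a \in s -> gen D s a.
Proof.
elim: s => [|b s IH] //=; rewrite inE => /predU1P [->|sa].
  by exists 1, 0; split; [exact: D1|exact: submod0 (gen_submod s)|rewrite mul1r addr0].
by exists 0, a; split; [exact: D0|exact: IH|rewrite mul0r add0r].
Qed.

Lemma gen_sub s C : submod C -> (forall a, a \in s -> C a) -> subset_K (gen D s) C.
Proof.
move=> hC; elim: s => [|b s IH] sC x /=; first by move->; exact: submod0.
case=> d [y [Dd gy ->]]; apply: submodD => //.
  by apply: submodM => //; apply: sC; rewrite inE eqxx.
by apply: IH => // a sa; apply: sC; rewrite inE sa orbT.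
Qed.

Lemma gen_subset s t : {subset s <= t} -> subset_K (gen D s) (gen D t).
Proof. by move=> st; apply: gen_sub => [|a /st]; [exact: gen_submod|exact: gen_mem]. Qed.

Lemma gen_integral s : (forall a, a \in s -> D a) -> subset_K (gen D s) D.
Proof. by apply: gen_sub; exact: submod_D. Qed.

Lemma gen_frac s : (forall a, a \in s -> D a) -> nonzero_set (gen D s) -> frac (gen D s).
Proof. by move=> sD; apply: frac_integral; [exact: gen_submod|exact: gen_integral]. Qed.

Lemma gen_nonzero s y : gen D s y -> y != 0 -> exists2 a, a \in s & a != 0.
Proof.
move=> gy /eqP y0; apply: contrapT => s0; apply: y0.
have zero_submod : submod (fun t : K => t = 0).
  by split=> // [a b -> ->|a b _ ->]; rewrite ?addr0 ?mulr0.
apply: (gen_sub zero_submod) gy => a sa; apply/eqP; apply: contrapT => /negP a0.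
by apply: s0; exists a.
Qed.

Lemma finite_type_gen s : frac (gen D s) -> finite_type D star (star (gen D s)).
Proof.
move=> fg; split; first by split; [exact: star_frac|exact: star_idem].
by exists (gen D s); split=> //; exists s.
Qed.

Lemma mulI_sub A B C : submod C -> (forall a b, A a -> B b -> C (a * b)) ->
  subset_K (mulI A B) C.
Proof.
move=> hC hAB _ [s [hs ->]]; elim: s hs => [|p s IH] hs.
  by rewrite big_nil; exact: submod0.
rewrite big_cons; apply: submodD => //.
  by have [] := hs p (mem_head _ _); apply: hAB.
by apply: IH => q sq; apply: hs; rewrite inE sq orbT.
Qed.

Lemma mulI_mul (A B : K -> Prop) a b : A a -> B b -> mulI A B (a * b).
Proof.
by move=> Aa Bb; exists [:: (a, b)]; rewrite big_seq1; split=> // p; rewrite inE => /eqP ->.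
Qed.

Lemma mulI_submod A B : submod A -> submod (mulI A B).
Proof.
move=> hA; split; first by exists [::]; rewrite big_nil.
- move=> _ _ [s [hs ->]] [t [ht ->]]; exists (s ++ t); rewrite big_cat.
  by split=> // p; rewrite mem_cat => /orP [/hs|/ht].
- move=> d _ Dd [s [hs ->]]; exists [seq (d * p.1, p.2) | p <- s]; split.
    by move=> _ /mapP [p sp ->] /=; have [Ap Bp] := hs p sp; split=> //; apply: submodM.
  by rewrite big_map mulr_sumr; apply: eq_bigr => p _; rewrite mulrA.
Qed.

Lemma mulI_integral A B : subset_K A D -> subset_K B D -> subset_K (mulI A B) D.
Proof. by move=> sA sB; apply: mulI_sub; [exact: submod_D|move=> a b /sA Da /sB Db; apply: DM]. Qed.

Lemma mulI_frac A B : frac A -> frac B -> subset_K A D -> subset_K B D -> frac (mulI A B).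
Proof.
move=> fA fB sA sB; apply: frac_integral; [exact/mulI_submod/frac_submod|exact: mulI_integral|].
have [a [a0 Aa]] := frac_nonzero fA; have [b [b0 Bb]] := frac_nonzero fB.
by exists (a * b); split; [exact: mulf_neq0|exact: mulI_mul].
Qed.

Lemma prodI_integral s : (forall i, (i < size s)%N -> subset_K (nth D s i) D) ->
  subset_K (prodI D s) D.
Proof.
elim: s => [|I s IH] sI //=; apply: mulI_integral; first exact: (sI 0%N).
by apply: IH => i; apply: (sI i.+1).
Qed.

Lemma prodI_frac s : (forall i, (i < size s)%N -> frac (nth D s i) /\ subset_K (nth D s i) D) ->
  frac (prodI D s).
Proof.
elim: s => [|I s IH] hs /=; first exact: frac_D.
have [fI sI] := hs 0%N isT; apply: mulI_frac => //; first by apply: IH => i; apply: (hs i.+1).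
by apply: prodI_integral => i /(hs i.+1) [].
Qed.

(** * Prime and maximal star-ideals *)

Section Prime.
Variable Q : K -> Prop.
Hypothesis primeQ : prime_ideal D Q.

Lemma prime_submod : submod Q. Proof. by case: primeQ. Qed.
Lemma prime0 : Q 0. Proof. exact: submod0 prime_submod. Qed.
Lemma prime_integral : subset_K Q D. Proof. by case: primeQ. Qed.
Lemma prime_not1 : ~ Q 1. Proof. by case: primeQ. Qed.

Lemma prime_mul a b : D a -> D b -> Q (a * b) -> Q a \/ Q b.
Proof. by case: primeQ => _ _ _; apply. Qed.

Lemma prime_notM a b : D a -> D b -> ~ Q a -> ~ Q b -> ~ Q (a * b).
Proof. by move=> Da Db nQa nQb /(prime_mul Da Db) []. Qed.

Lemma prime_notX a n : D a -> ~ Q a -> ~ Q (a ^+ n).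
Proof.
move=> Da nQa; elim: n => [|n IH]; first by rewrite expr0; exact: prime_not1.
by rewrite exprS; apply: prime_notM => //; apply: DX.
Qed.

Lemma primeX a n : D a -> Q (a ^+ n) -> Q a.
Proof. by move=> Da Qan; apply: contrapT => nQa; exact: prime_notX Da nQa Qan. Qed.

Lemma prime_neq0 s : ~ Q s -> s != 0.
Proof. by apply: contra_notN => /eqP ->; exact: prime0. Qed.

Lemma prime_nonunit x : x != 0 -> Q x -> ~ D x^-1.
Proof. by move=> x0 Qx Dx'; apply: prime_not1; rewrite -(mulVf x0); apply: submodM prime_submod Dx' Qx. Qed.

Lemma prime_prodI s : (forall i, (i < size s)%N -> subset_K (nth D s i) D) ->
  subset_K (prodI D s) Q -> exists2 i, (i < size s)%N & subset_K (nth D s i) Q.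
Proof.
elim: s => [|I s IH] sD /=; first by move/(_ 1 D1)/prime_not1.
move=> IsQ; case: (EM (subset_K I Q)) => [IQ|nIQ]; first by exists 0%N.
have [y Iy nQy] : exists2 y, I y & ~ Q y.
  by apply: contrapT => nex; apply: nIQ => y Iy; apply: contrapT => nQy; apply: nex; exists y.
have [i si sQ] : exists2 i, (i < size s)%N & subset_K (nth D s i) Q; last by exists i.+1.
apply: IH => [i|z sz]; first exact: (sD i.+1).
have Dz : D z by apply: prodI_integral sz => i; apply: (sD i.+1).
have /(prime_mul (sD 0%N isT y Iy) Dz) [] // : Q (y * z) by apply: IsQ; exact: mulI_mul.
Qed.

End Prime.

Lemma max_star_prime P : maxs P -> prime_ideal D P.
Proof.
move=> mP; have [fP SP sP nP] := max_star_props mP; have hP := frac_submod fP.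
split=> // a b Da Db Pab; case: (EM (P a)) => Pa; [by left|right].
pose N := sumI P (principal D a).
have fN : frac N by apply: sumI_frac => //; [exact: principal_submod|exact: principal_integral].
case: (EM (star N 1)) => N1.
  case: (eqVneq b 0) => [->|b0]; first exact: submod0.
  rewrite -(mulr1 b); apply: (star_mul_sub b0 fN fP SP) N1.
  move=> _ [p [_ [Pp [d [Dd ->]] ->]]]; rewrite mulrDr; apply: submodD => //.
    exact: submodM.
  by rewrite mulrCA [d * _]mulrC [b * a]mulrC; apply: submodMr.
have NP : star N = P.
  apply: max_star_maximal mP _ _.
    apply/pisP; split=> //; [exact: star_frac|exact: star_idem|].
    by apply: star_integral => //; apply: sumI_integral => //; exact: principal_integral.
  by move=> y Py; apply: star_ext => //; apply: sumI_subl => //; exact: principal_submod.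
by case: Pa; rewrite -NP; apply: star_ext => //; apply: sumI_subr => //; exact: principal_self.
Qed.

Lemma max_star_sep P Q : maxs P -> maxs Q -> P <> Q -> exists c, P c /\ ~ Q c.
Proof.
move=> mP mQ PQ; apply: contrapT => nex; apply/PQ/esym/(max_star_maximal mP).
  by apply/pisP; apply: max_star_props mQ.
by move=> c Pc; apply: contrapT => nQc; apply: nex; exists c.
Qed.

Lemma star_chain_union (F : (K -> Prop) -> Prop) X0 : F X0 ->
  (forall X Y, F X -> F Y -> subset_K X Y \/ subset_K Y X) ->
  (forall X, F X -> pis X) -> pis (fun t => exists2 X, F X & X t).
Proof.
move=> FX0 Ftot Fpis; set U := fun t => _.
have bound := chain_seq_bound FX0 Ftot.
have FX X : F X -> [/\ frac X, star X = X, subset_K X D & ~ X 1] by move/Fpis/pisP.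
have [fX0 _ _ _] := FX X0 FX0.
have submodU : submod U.
  split.
  - by exists X0 => //; exact: submod0 (frac_submod fX0).
  - move=> x y Ux Uy.
    have [X FXX sX] : exists2 X, F X & forall a, a \in [:: x; y] -> X a.
      by apply: bound => a; rewrite !inE => /orP [] /eqP ->.
    have [fX _ _ _] := FX X FXX.
    by exists X => //; apply: submodD (frac_submod fX) _ _; apply: sX; rewrite !inE eqxx ?orbT.
  - move=> a x Da [X FXX Xx]; exists X => //; have [fX _ _ _] := FX X FXX.
    exact: submodM (frac_submod fX) Da Xx.
have sUD : subset_K U D by move=> t [X /FX [_ _ /(_ t) sX _]]; apply: sX.
have fU : frac U.
  apply: frac_integral => //; have [x [x0 Xx]] := frac_nonzero fX0.
  by exists x; split=> //; exists X0.
apply/pisP; split=> //; last by case=> X /FX [_ _ _ nX].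
rewrite predeqE => z; split; last exact: star_ext.
rewrite star_fin // => -[J [fJ [s eJ] sJU SJz]]; subst J.
have [X FXX sX] := bound s (fun a sa => sJU a (gen_mem sa)).
have [fX SX _ _] := FX X FXX.
exists X => //; rewrite -SX; apply: (star_mono fJ fX _ SJz).
by apply: gen_sub => //; exact: frac_submod.
Qed.

Lemma max_star_above A : pis A -> exists2 P, maxs P & subset_K A P.
Proof.
move=> pA; pose good X := pis X /\ subset_K A X.
(* The empty chain is bounded only by the empty set, which is therefore admitted in [PP]. *)
pose PP X := X = (fun _ => False) \/ good X.
have [M [PM Mmax]] : exists M, PP M /\ forall B, classical_sets.proper M B -> ~ PP B.
  apply: classical_sets.Zorn_bigcup => F FP Ftot; set U := classical_sets.bigcup _ _.
  case: (EM (exists2 X, F X & good X)) => [[X0 FX0 gX0]|nog]; last first.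
    left; rewrite predeqE => t; split=> // -[X FX Xt].
    by case: (FP X FX) => [eX|gX]; [rewrite eX in Xt|apply: nog; exists X].
  have -> : U = (fun t => exists2 X, F X /\ good X & X t).
    rewrite predeqE => t; split=> [[X FX Xt]|[X [FX _] Xt]]; last by exists X.
    by exists X => //; split=> //; case: (FP X FX) => // eX; rewrite eX in Xt.
  right; split; last by move=> t At; exists X0 => //; apply: gX0.2.
  apply: (star_chain_union (X0 := X0)) => [|X Y [FX _] [FY _]|X [_ []]] //.
  exact: Ftot.
case: PM => [M0|[pM AM]].
  case/pisP: (pA) => /frac_nonzero [x [x0 Ax]] _ _ _.
  case: (Mmax A); last by right; split=> // t.
  by rewrite M0; split=> [t []|/(_ x Ax)].
exists M => //; split=> // N pN MN; apply: contrapT => NM.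
apply: (Mmax N); last by right; split=> // t /AM /MN.
by split=> // NM'; apply: NM; rewrite predeqE => t; split; [exact: NM'|exact: MN].
Qed.

(* The conductor [(A^* : z)] is a star-ideal contained in no maximal star-ideal. *)
Lemma star_local_global A z : frac A ->
  (forall Q, maxs Q -> exists s, [/\ D s, ~ Q s & A (s * z)]) -> star A z.
Proof.
move=> fA hA; have fSA := star_frac fA; have hSA := frac_submod fSA.
case: (eqVneq z 0) => [->|z0]; first exact: submod0.
pose C d := D d /\ star A (d * z).
have submodC : submod C.
  split; first by split; [exact: D0|rewrite mul0r; exact: submod0].
    by move=> x y [Dx Ax] [Dy Ay]; split; [exact: DD|rewrite mulrDl; exact: submodD].
  by move=> a x Da [Dx Ax]; split; [exact: DM|rewrite -mulrA; exact: submodM].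
have fC : frac C.
  apply: frac_integral => //; first by move=> d [].
  have [f [f0 Af]] := frac_nonzero fA.
  have [p [q [Dp Dq q0 ef]]] := fracK f.
  have [a [b [Da Db b0 ez]]] := fracK z.
  have p0 : p != 0 by apply: contraNneq f0 => p0; rewrite ef p0 mul0r.
  exists (p * b); split; first exact: mulf_neq0.
  split; first exact: DM.
  have -> : p * b * z = (q * a) * f by rewrite ez ef; field; rewrite q0 b0.
  by apply: star_ext => //; apply: submodM (frac_submod fA) _ Af; exact: DM.
have SC : star C = C.
  rewrite predeqE => d; split; last exact: star_ext.
  move=> Cd; split; first by apply: (star_integral fC) Cd => y [].
  rewrite mulrC; apply: (star_mul_sub z0 fC fSA (star_idem fA)) Cd.
  by move=> y [_ Ay]; rewrite mulrC.
case: (EM (C 1)) => [[_]|nC1]; first by rewrite mul1r.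
have [Q mQ CQ] : exists2 Q, maxs Q & subset_K C Q.
  by apply: max_star_above; apply/pisP; split=> // d [].
have [s [Ds nQs As]] := hA Q mQ.
by case: nQs; apply: CQ; split=> //; apply: star_ext.
Qed.

(** * Localization at a prime *)

Section Localization.
Variable P : K -> Prop.
Hypothesis primeP : prime_ideal D P.

Lemma loc_of_D x : D x -> loc D P x.
Proof.
by move=> Dx; exists x, 1; split=> //; [exact: D1|exact: prime_not1|rewrite divr1].
Qed.

Lemma locM x y : loc D P x -> loc D P y -> loc D P (x * y).
Proof.
move=> [a [s [Da Ds nPs ->]]] [b [t [Db Dt nPt ->]]].
exists (a * b), (s * t); split; [exact: DM|exact: DM|exact: prime_notM|].
by rewrite mulf_div.
Qed.

Lemma locD x y : loc D P x -> loc D P y -> loc D P (x + y).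
Proof.
move=> [a [s [Da Ds nPs ->]]] [b [t [Db Dt nPt ->]]].
exists (a * t + b * s), (s * t); split; [by apply: DD; apply: DM|exact: DM|exact: prime_notM|].
by field; rewrite (prime_neq0 primeP nPs) (prime_neq0 primeP nPt).
Qed.

Lemma locV a : D a -> ~ P a -> loc D P a^-1.
Proof. by move=> Da nPa; exists 1, a; split=> //; [exact: D1|rewrite div1r]. Qed.

Lemma locX x n : loc D P x -> loc D P (x ^+ n).
Proof.
move=> lx; elim: n => [|n IH]; first by rewrite expr0; apply: loc_of_D; exact: D1.
by rewrite exprS; apply: locM.
Qed.

Definition locdvd x y := exists t, loc D P t /\ y = x * t.

Lemma locdvd_refl x : locdvd x x.
Proof. by exists 1; split; [apply: loc_of_D; exact: D1|rewrite mulr1]. Qed.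

Lemma locdvd_trans x y z : locdvd x y -> locdvd y z -> locdvd x z.
Proof.
move=> [t [lt ->]] [u [lu ->]].
by exists (t * u); split; [exact: locM|rewrite mulrA].
Qed.

Lemma locdvd_mulr x y c : loc D P c -> locdvd x y -> locdvd x (y * c).
Proof. by move=> lc [t [lt ->]]; exists (t * c); split; [exact: locM|rewrite mulrA]. Qed.

Lemma locdvd_mulD x y : D y -> locdvd x (x * y).
Proof. by move=> Dy; exists y; split=> //; exact: loc_of_D. Qed.

Lemma locdvd0 x : locdvd x 0.
Proof. by exists 0; split; [apply: loc_of_D; exact: D0|rewrite mulr0]. Qed.

Lemma locdvd_den x y : locdvd x y -> exists s, [/\ D s, ~ P s & exists a, D a /\ s * y = x * a].
Proof.
move=> [_ [[a [s [Da Ds nPs ->]]] ->]]; exists s; split=> //; exists a; split=> //.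
by field; rewrite (prime_neq0 primeP nPs).
Qed.

Lemma loc_unit_or_unit1B z : loc D P z ->
  (z != 0 /\ loc D P z^-1) \/ (1 - z != 0 /\ loc D P (1 - z)^-1).
Proof.
move=> [a [s [Da Ds nPs ->]]]; have s0 := prime_neq0 primeP nPs.
case: (EM (P a)) => Pa.
  have nPsa : ~ P (s - a).
    by move=> Psa; apply: nPs; rewrite -(subrK a s); apply: submodD (prime_submod primeP) Psa Pa.
  have sa0 := prime_neq0 primeP nPsa.
  right; have -> : 1 - a / s = (s - a) / s by field.
  split; first by rewrite mulf_neq0 ?invr_eq0.
  by rewrite invf_div; exists s, (s - a); split=> //; exact: DB.
left; have a0 := prime_neq0 primeP Pa; split; first by rewrite mulf_neq0 ?invr_eq0.
by rewrite invf_div; exists s, a.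
Qed.

Definition loc_comparable f := forall v, loc D P v -> locdvd v f \/ locdvd f v.

Lemma loc_comparableD f : (forall w, D w -> locdvd w f \/ locdvd f w) -> loc_comparable f.
Proof.
move=> cf v [w [s [Dw Ds nPs ->]]]; have s0 := prime_neq0 primeP nPs.
case: (cf w Dw) => [[t [lt ->]]|[t [lt ->]]].
  by left; exists (s * t); split; [apply: locM => //; exact: loc_of_D|field].
by right; exists (t / s); split; [apply: locM => //; exact: locV|rewrite mulrA].
Qed.

End Localization.

Lemma D_eq_cap_loc x : D x <-> (forall P, maxs P -> loc D P x).
Proof.
split=> [Dx P /max_star_prime pP|locx]; first exact: loc_of_D.
rewrite -starD; apply: star_local_global frac_D _ => Q mQ.
have [a [s [Da Ds nQs ->]]] := locx Q mQ.
by exists s; split=> //; rewrite mulrC divfK // (prime_neq0 (max_star_prime mQ) nQs).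
Qed.

(** * Factorization into super homogeneous ideals implies GKD *)

(* [local_gen P A f g] certifies [A D_P = f D_P]. *)
Definition local_gen P A f g :=
  [/\ A f, forall y, A y -> D (g * y), D (f * g) & ~ P (f * g)].

Lemma local_gen_dvd P A f g : prime_ideal D P -> local_gen P A f g ->
  forall y, A y -> locdvd P f y.
Proof.
move=> pP [_ gA Dfg nPfg] y Ay; have fg0 := prime_neq0 pP nPfg.
exists ((g * y) / (f * g)); split.
  by apply: locM => //; [apply: (loc_of_D pP); exact: gA|exact: locV].
have f0 : f != 0 by apply: contraNneq fg0 => ->; rewrite mul0r.
have g0 : g != 0 by apply: contraNneq fg0 => ->; rewrite mulr0.
by field; rewrite f0 g0.
Qed.

Lemma local_gen_star P A f g : prime_ideal D P -> frac A ->
  local_gen P A f g -> local_gen P (star A) f g.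
Proof.
move=> pP fA [Af gA Dfg nPfg]; have g0 : g != 0.
  by apply: contra_notN nPfg => /eqP ->; rewrite mulr0; exact: prime0.
by split=> //; [exact: star_ext|exact: star_mul_sub g0 fA frac_D starD gA].
Qed.

Lemma star_invertible_local_gen F P : frac F -> star_invertible D star (star F) -> maxs P ->
  exists f g, F f /\ local_gen P (star F) f g.
Proof.
move=> fF invF mP; have [fP SP sP nP] := max_star_props mP; have hP := frac_submod fP.
have fSF := star_frac fF.
pose FFinv := mulI (star F) (inv_ideal D (star F)).
have fFFinv : frac FFinv.
  apply: frac_integral; first exact/mulI_submod/frac_submod.
    by apply: mulI_sub => [|a b Fa Fb]; [exact: submod_D|rewrite mulrC; apply: Fb].
  have [a [a0 Fa]] := frac_nonzero fSF; case: fSF => _ _ [d [Dd d0 hd]].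
  by exists (a * d); split; [exact: mulf_neq0|exact: mulI_mul].
have [f' [g [Ff' Fg nPf'g]]] : exists f' g, [/\ star F f', inv_ideal D (star F) g & ~ P (f' * g)].
  apply: contrapT => nex; apply: nP; rewrite -SP; apply: (star_mono fFFinv fP).
    apply: mulI_sub => // a b Fa Fb; apply: contrapT => nPab; apply: nex; by exists a, b.
  by rewrite invF; exact: D1.
have g0 : g != 0 by apply: contra_notN nPf'g => /eqP ->; rewrite mulr0; exact: submod0.
have [f Ff nPgf] : exists2 f, F f & ~ P (g * f).
  apply: contrapT => nex; apply: nPf'g; rewrite mulrC; apply: (star_mul_sub g0 fF fP SP) Ff'.
  by move=> y Fy; apply: contrapT => nPgy; apply: nex; exists y.
exists f, g; split=> //; rewrite /local_gen mulrC; split=> //; first exact: star_ext.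
by apply: Fg; exact: star_ext.
Qed.

Lemma super_homog_props I : star_super_homog D star I ->
  [/\ frac I, star I = I, subset_K I D & ~ I 1].
Proof. by case=> -[/pisP]. Qed.

(* Adjoining [w] to the generators of [I] gives an invertible ideal, hence a local
   generator [f'] of [(I, w)]; comparing [f'] with [f] and [w] shows [f | w] or [w | f]. *)
Lemma super_homog_comparable I P s f g w : star_super_homog D star I ->
  I = star (gen D s) -> frac (gen D s) -> maxs P -> local_gen P I f g -> D w ->
  locdvd P w f \/ locdvd P f w.
Proof.
move=> shI eI fs mP lg Dw; have pP := max_star_prime mP.
have [_ _ sI _] := super_homog_props shI.
have sws : {subset s <= w :: s} by move=> a sa; rewrite inE sa orbT.
have fW : frac (gen D (w :: s)).
  apply: gen_frac => [a|]; last first.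
    by have [y [y0 sy]] := frac_nonzero fs; exists y; split=> //; apply: gen_subset sy.
  by rewrite inE => /predU1P [->|/gen_mem sa] //; apply: sI; rewrite eI; exact: star_ext.
have IW : subset_K I (star (gen D (w :: s))) by rewrite eI; apply: star_mono => //; exact: gen_subset.
have invW := shI.2 _ (finite_type_gen fW) IW.
have [f' [g' [Wf' lg']]] := star_invertible_local_gen fW invW mP.
have [u [lu fu]] : locdvd P f' f by apply: (local_gen_dvd pP lg'); apply: IW; case: lg.
have [t [lt wt]] : locdvd P f' w.
  by apply: (local_gen_dvd pP lg'); apply: star_ext => //; apply: gen_mem; exact: mem_head.
case: Wf' => d [z [Dd sz ef']].
have [b [lb zb]] : locdvd P f z by apply: (local_gen_dvd pP lg); rewrite eI; exact: star_ext.
have key : f' * (1 - u * b) = d * w by rewrite mulrBr mulr1 mulrA -fu -zb ef' addrK.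
case: (loc_unit_or_unit1B pP (locM pP lu lb)) => [[ub0 lub]|[ub0 lub]].
  have u0 : u != 0 by apply: contraNneq ub0 => ->; rewrite mul0r.
  have b0 : b != 0 by apply: contraNneq ub0 => ->; rewrite mulr0.
  right; exists (b * (u * b)^-1 * t); split; first exact: (locM pP (locM pP lb lub) lt).
  by rewrite wt fu; field; rewrite u0 b0.
left; exists (d * (1 - u * b)^-1 * u); split.
  exact: (locM pP (locM pP (loc_of_D pP Dd) lub) lu).
rewrite fu; have -> : f' = d * w / (1 - u * b) by rewrite -key; field.
by rewrite !mulrA [w * d]mulrC.
Qed.

Lemma super_homog_local_gen I P : star_super_homog D star I -> maxs P ->
  exists f g, local_gen P I f g /\ loc_comparable P f.
Proof.
move=> shI mP; have pP := max_star_prime mP.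
have [[_ [_ [F [fF [s eF] eI]]] _] invI] := shI; subst F.
have [f [g [_ lg]]] : exists f g, gen D s f /\ local_gen P I f g.
  rewrite eI; apply: star_invertible_local_gen => //; rewrite -eI.
  by apply: invI => [|y //]; rewrite eI; exact: finite_type_gen.
exists f, g; split=> //; apply: loc_comparableD => // w Dw.
exact: super_homog_comparable shI eI fF mP lg Dw.
Qed.

Lemma prodI_local_gen s P : (forall i, (i < size s)%N -> star_super_homog D star (nth D s i)) ->
  maxs P -> exists f g, local_gen P (prodI D s) f g /\ loc_comparable P f.
Proof.
move=> shs mP; have pP := max_star_prime mP.
elim: s shs => [|I s IH] shs /=.
  exists 1, 1; split; last by move=> v lv; right; exists v; split=> //; rewrite mul1r.
  by split=> [|y||]; rewrite ?mulr1 ?mul1r //; [exact: D1|exact: D1|exact: prime_not1].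
have [f [g [[If gI Dfg nPfg] cf]]] := super_homog_local_gen (shs 0%N isT) mP.
have [F [G [[sF Gs DFG nPFG] cF]]] := IH (fun i => shs i.+1).
have DF : D F by apply: prodI_integral sF => i /(shs i.+1) /super_homog_props [].
exists (f * F), (g * G); split.
  split; first exact: mulI_mul.
  - apply: mulI_sub => [|a b Ia sb]; first exact: submod_scale submod_D.
    by rewrite mulrACA; apply: DM; [exact: gI|exact: Gs].
  - by rewrite mulrACA; apply: DM.
  - by rewrite mulrACA; apply: prime_notM => //; apply: DM.
move=> v lv; case: (cf v lv) => [[t [lt ->]]|[v' [lv' ->]]].
  by left; exists (t * F); split; [apply: locM => //; exact: loc_of_D|rewrite mulrA].
by case: (cF v' lv') => [[t [lt ->]]|[t [lt ->]]]; [left|right]; exists t; rewrite mulrA.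
Qed.

Lemma max_star_sum_one P Q : maxs P -> maxs Q -> P <> Q -> star (sumI P Q) 1.
Proof.
move=> mP mQ PQ; have [fP SP sP nP] := max_star_props mP; have [fQ SQ sQ nQ] := max_star_props mQ.
have hP := frac_submod fP; have hQ := frac_submod fQ.
have fPQ : frac (sumI P Q) by apply: sumI_frac.
apply: contrapT => n1.
have ePQ : star (sumI P Q) = P.
  apply: max_star_maximal mP _ _; last by move=> y Py; apply: star_ext => //; apply: sumI_subl.
  apply/pisP; split=> //; [exact: star_frac|exact: star_idem|].
  by apply: star_integral => //; apply: sumI_integral.
apply/PQ/(max_star_maximal mQ); first exact/pisP.
by move=> y Qy; rewrite -ePQ; apply: star_ext => //; apply: sumI_subr.
Qed.

Lemma gen_sumI_split (A B : K -> Prop) s : submod A -> submod B ->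
  (forall a, a \in s -> sumI A B a) ->
  exists sa sb, [/\ forall a, a \in sa -> A a, forall b, b \in sb -> B b &
    subset_K (gen D s) (sumI (gen D sa) (gen D sb))].
Proof.
move=> hA hB; elim: s => [|c s IH] sAB.
  by exists [::], [::]; split=> // x /= ->; exists 0, 0; rewrite addr0.
have [sa [sb [saA sbB ss]]] := IH (fun a sa => sAB a (mem_behead (s := c :: s) sa)).
have [a [b [Aa Bb ec]]] := sAB c (mem_head _ _).
exists (a :: sa), (b :: sb); split.
- by move=> a'; rewrite inE => /predU1P [->|/saA].
- by move=> b'; rewrite inE => /predU1P [->|/sbB].
- move=> _ /= [d [y [Dd sy ->]]]; have [u [v [su sv ->]]] := ss y sy.
  exists (d * a + u), (d * b + v); split; [by exists d, u|by exists d, v|].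
  by rewrite ec mulrDr addrACA.
Qed.

Lemma star_gen_cat s l P : maxs P -> frac (gen D s) -> subset_K (star (gen D s)) P ->
  (forall a, a \in l -> P a) ->
  [/\ pis (star (gen D (s ++ l))), finite_type D star (star (gen D (s ++ l))),
      subset_K (star (gen D s)) (star (gen D (s ++ l))),
      subset_K (gen D l) (star (gen D (s ++ l))) & subset_K (star (gen D (s ++ l))) P].
Proof.
move=> mP fs sP lP; have [fP SP PD nP] := max_star_props mP; have hP := frac_submod fP.
have ss : {subset s <= s ++ l} by move=> a sa; rewrite mem_cat sa.
have ls : {subset l <= s ++ l} by move=> a la; rewrite mem_cat la orbT.
have catP a : a \in s ++ l -> P a.
  by rewrite mem_cat => /orP [/gen_mem/(star_ext fs)/sP|/lP].
have fcat : frac (gen D (s ++ l)).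
  apply: gen_frac => [a /catP /PD //|]; have [y [y0 sy]] := frac_nonzero fs.
  by exists y; split=> //; apply: gen_subset sy.
have catSP : subset_K (star (gen D (s ++ l))) P.
  by rewrite -SP; apply: star_mono => //; exact: gen_sub.
split=> //.
- by apply/pisP; split=> [|||/catSP //]; [exact: star_frac|exact: star_idem|move=> y /catSP /PD].
- exact: finite_type_gen.
- by apply: star_mono => //; exact: gen_subset.
- by move=> y /(gen_subset ls) /(star_ext fcat).
Qed.

Lemma star_homog_max_unique I P Q : star_homog D star I -> maxs P -> maxs Q ->
  subset_K I P -> subset_K I Q -> P = Q.
Proof.
move=> [pI [_ [F [fF [s eF] eI]]] homI] mP mQ IP IQ; subst F I.
apply: contrapT => PQ.
have [fP _ sP _] := max_star_props mP; have [fQ _ sQ _] := max_star_props mQ.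
have hP := frac_submod fP; have hQ := frac_submod fQ.
move: (max_star_sum_one mP mQ PQ); rewrite star_fin; last exact: sumI_frac.
case=> J [fJ [t eJ] sJ SJ1]; subst J.
have [sa [sb [saP sbQ sJab]]] := gen_sumI_split hP hQ (fun a ta => sJ a (gen_mem ta)).
have [pA ftA IA saA _] := star_gen_cat mP fF IP saP.
have [pB ftB IB sbB _] := star_gen_cat mQ fF IQ sbQ.
apply: (homI _ _ pA ftA pB ftB IA IB).
case/pisP: (pA) => fA _ sA _; case/pisP: (pB) => fB _ sB _.
have fAB : frac (sumI (star (gen D (s ++ sa))) (star (gen D (s ++ sb)))).
  by apply: sumI_frac => //; exact: frac_submod.
apply: submod_eqD; [exact: star_submod|by apply: star_integral => //; exact: sumI_integral|].
apply: (star_mono fJ fAB _ SJ1) => x /sJab [u [v [su sv ->]]].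
by exists u, v; split=> //; [exact: saA|exact: sbB].
Qed.

Definition sh1_factorization := forall x : K, D x -> x != 0 -> ~ D x^-1 ->
  exists s : seq (K -> Prop),
    (forall i : nat, (i < size s)%N -> star_super_homog_type1 D star (nth D s i)) /\
    principal D x = star (prodI D s).

Section Factorization.
Hypothesis fact : sh1_factorization.

Lemma sh1_factor_props x s : (forall i, (i < size s)%N -> star_super_homog_type1 D star (nth D s i)) ->
  principal D x = star (prodI D s) ->
  [/\ forall i, (i < size s)%N -> subset_K (nth D s i) D, frac (prodI D s)
    & subset_K (prodI D s) (principal D x)].
Proof.
move=> shs exs; have sD i : (i < size s)%N -> subset_K (nth D s i) D.
  by move/shs => [/super_homog_props []].
have fs : frac (prodI D s) by apply: prodI_frac => i /shs [/super_homog_props []].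
by split=> //; rewrite exs; exact: star_ext.
Qed.

Lemma sh1_factorization_valuation P : maxs P -> forall x, x != 0 -> loc D P x \/ loc D P x^-1.
Proof.
move=> mP x x0; have pP := max_star_prime mP.
have [a [b [Da Db b0 ex]]] := fracK x.
have a0 : a != 0 by apply: contraNneq x0 => a0; rewrite ex a0 mul0r.
case: (EM (D a^-1)) => Da'.
  by right; rewrite ex invf_div; apply: loc_of_D => //; exact: DM.
have [s [shs eas]] := fact Da a0 Da'.
have [_ fs sa] := sh1_factor_props shs eas.
have [F [G [lg cF]]] := prodI_local_gen (fun i si => (shs i si).1) mP.
have aF : locdvd P a F.
  by case: lg => /sa [d [Dd ->]] _ _ _; rewrite mulrC; apply: locdvd_mulD.
have Fa : locdvd P F a.
  by apply: (local_gen_dvd pP (local_gen_star pP fs lg)); rewrite -eas; exact: principal_self.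
case: (cF b (loc_of_D pP Db)) => [bF|Fb].
  by left; have [t [lt et]] := locdvd_trans pP bF Fa; rewrite ex et mulrC mulKf.
by right; have [t [lt et]] := locdvd_trans pP aF Fb; rewrite ex invf_div et mulrC mulKf.
Qed.

Lemma sh1_factorization_height1 P : maxs P ->
  forall Q, prime_ideal D Q -> nonzero_set Q -> subset_K Q P -> Q = P.
Proof.
move=> mP Q pQ [x [x0 Qx]] QP; have [_ _ PD _] := max_star_props mP.
have [s [shs exs]] := fact (prime_integral pQ Qx) x0 (prime_nonunit pQ x0 Qx).
have [sD fs sx] := sh1_factor_props shs exs.
have [i si IQ] : exists2 i, (i < size s)%N & subset_K (nth D s i) Q.
  apply: prime_prodI => // y /sx [d [Dd ->]]; exact: submodM (prime_submod pQ) Dd Qx.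
rewrite predeqE => y; split=> [/QP //|Py].
case: (eqVneq y 0) => [->|y0]; first exact: prime0.
have [n [_ yn]] := (shs i si).2.2 P mP (fun z Iz => QP z (IQ z Iz)) y Py y0.
apply: (primeX pQ (PD y Py) (n := n)); apply/IQ/yn; first exact/DX/PD.
by exists 1; split; [exact: (loc_of_D (max_star_prime mP) D1)|rewrite mulr1].
Qed.

(* Each maximal star-ideal containing [x] contains some factor, and is then the
   union of all maximal star-ideals containing that factor. *)
Lemma sh1_factorization_locally_finite x : D x -> x != 0 ->
  exists (n : nat) (f : nat -> K -> Prop),
    forall P, maxs P -> P x -> exists i, (i < n)%N /\ P = f i.
Proof.
move=> Dx x0; case: (EM (D x^-1)) => Dx'.
  exists 0%N, (fun _ => D) => P mP Px.
  by case: (prime_nonunit (max_star_prime mP) x0 Px Dx').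
have [s [shs exs]] := fact Dx x0 Dx'.
have [sD fs sx] := sh1_factor_props shs exs.
exists (size s), (fun i y => exists2 P', maxs P' /\ subset_K (nth D s i) P' & P' y).
move=> P mP Px; have [fP _ _ _] := max_star_props mP.
have [i si IP] : exists2 i, (i < size s)%N & subset_K (nth D s i) P.
  apply: (prime_prodI (max_star_prime mP) sD) => y /sx [d [Dd ->]].
  exact: submodM (frac_submod fP) Dd Px.
exists i; split=> //; rewrite predeqE => y; split=> [Py|[P' [mP' IP'] P'y]]; first by exists P.
by rewrite (star_homog_max_unique (shs i si).1.1 mP mP' IP IP').
Qed.

Lemma sh1_factorization_GKD : star_GKD D star.
Proof.
have ht1 := sh1_factorization_height1; split=> //; split.
- exact: sh1_factorization_valuation.
- exact: D_eq_cap_loc.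
- exact: sh1_factorization_locally_finite.
- move=> P Q mP mQ PQ R pR nzR [RP RQ]; apply: PQ.
  by rewrite -(ht1 P mP R pR nzR RP) (ht1 Q mQ R pR nzR RQ).
Qed.

End Factorization.

(** * A GKD has the factorization property *)

Definition locrad P x y := D y /\ exists k : nat, locdvd P x (y ^+ k).

Lemma locdvd_prime P x z : prime_ideal D P -> P x -> D z -> locdvd P x z -> P z.
Proof.
move=> pP Px Dz /(locdvd_den pP) [s [Ds nPs [a [Da e]]]].
have : P (s * z) by rewrite e; exact: (submodMr (prime_submod pP) Da Px).
by case/(prime_mul pP Ds Dz).
Qed.

Lemma locrad_sub P x : prime_ideal D P -> P x -> subset_K (locrad P x) P.
Proof.
move=> pP Px y [Dy [k ky]]; apply: (primeX pP Dy (n := k)).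
by apply: (locdvd_prime pP Px _ ky); exact: DX.
Qed.

Section GKD.
Hypothesis gkd : star_GKD D star.

Lemma gkd_valuation P : maxs P -> forall z, z != 0 -> loc D P z \/ loc D P z^-1.
Proof. by case: gkd => -[val _ _ _] _; apply: val. Qed.

Lemma gkd_height1 P : maxs P ->
  forall Q, prime_ideal D Q -> nonzero_set Q -> subset_K Q P -> Q = P.
Proof. by case: gkd => _; apply. Qed.

Lemma gkd_locdvd_total P a b : maxs P -> locdvd P a b \/ locdvd P b a.
Proof.
move=> mP; have pP := max_star_prime mP.
case: (eqVneq a 0) => [->|a0]; first by right; exact: locdvd0.
case: (eqVneq b 0) => [->|b0]; first by left; exact: locdvd0.
have ba0 : b / a != 0 by rewrite mulf_neq0 ?invr_eq0.
case: (gkd_valuation mP ba0) => lba; [left; exists (b / a)|right; exists (b / a)^-1];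
  by split=> //; field; rewrite ?a0 ?b0.
Qed.

Lemma locrad_submod P x : maxs P -> submod (locrad P x).
Proof.
move=> mP; have pP := max_star_prime mP.
have lD1 := loc_of_D pP D1.
split; first by split; [exact: D0|exists 1%N; rewrite expr1; exact: locdvd0].
  move=> y1 y2 [Dy1 [k1 h1]] [Dy2 [k2 h2]]; split; first exact: DD.
  case: (gkd_locdvd_total y1 y2 mP) => [[t [lt e]]|[t [lt e]]].
    exists k1; rewrite e -{1}(mulr1 y1) -mulrDr exprMn.
    by apply: (locdvd_mulr pP) h1; apply: (locX pP); apply: (locD pP lD1 lt).
  exists k2; rewrite e -{2}(mulr1 y2) -mulrDr addrC exprMn.
  by apply: (locdvd_mulr pP) h2; apply: (locX pP); apply: (locD pP lD1 lt).
move=> a y Da [Dy [k h]]; split; first exact: DM.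
by exists k; rewrite exprMn mulrC; apply: (locdvd_mulr pP) h; apply: (locX pP); apply: (loc_of_D pP).
Qed.

Lemma locrad_prime P x : maxs P -> P x -> prime_ideal D (locrad P x).
Proof.
move=> mP Px; have pP := max_star_prime mP; have [_ _ _ nP1] := max_star_props mP.
split; [exact: locrad_submod|by move=> y []| |].
  by case=> _ [k]; rewrite expr1n => /(locdvd_prime pP Px D1).
move=> a b Da Db [_ [k h]].
case: (gkd_locdvd_total a b mP) => [[t [lt e]]|[t [lt e]]]; [right|left];
  split=> //; exists (k + k)%N; rewrite exprD.
  have -> : b ^+ k * b ^+ k = (a * b) ^+ k * t ^+ k by rewrite e -!exprMn; congr (_ ^+ _); ring.
  by apply: (locdvd_mulr pP) h; apply: (locX pP).
have -> : a ^+ k * a ^+ k = (a * b) ^+ k * t ^+ k by rewrite e -!exprMn; congr (_ ^+ _); ring.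
by apply: (locdvd_mulr pP) h; apply: (locX pP).
Qed.

(* By height one, the prime [locrad P x] below [P] is [P] itself. *)
Lemma gkd_locdvd_exp P x c : maxs P -> P x -> x != 0 -> P c ->
  exists k : nat, locdvd P x (c ^+ k).
Proof.
move=> mP Px x0 Pc; have pP := max_star_prime mP; have [_ _ PD _] := max_star_props mP.
have nz : nonzero_set (locrad P x).
  by exists x; split=> //; split; [exact: PD|exists 1%N; rewrite expr1; exact: locdvd_refl].
have eP := gkd_height1 mP (locrad_prime mP Px) nz (locrad_sub pP Px).
by have [] : locrad P x c by rewrite eP.
Qed.

Lemma max_star_ideals_enum x : D x -> x != 0 -> exists L : seq (K -> Prop),
  [/\ forall i, (i < size L)%N -> maxs (nth D L i) /\ nth D L i x,
      forall i j, (i < size L)%N -> (j < size L)%N -> i <> j -> nth D L i <> nth D L j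
    & forall P, maxs P -> P x -> exists j, (j < size L)%N /\ P = nth D L j].
Proof.
move=> Dx x0; case: gkd => -[_ _ locfin _] _.
have [n [f fP]] := locfin x Dx x0.
suff [L [Lmax Luniq Lf]] : exists L : seq (K -> Prop),
  [/\ forall i, (i < size L)%N -> maxs (nth D L i) /\ nth D L i x,
      forall i j, (i < size L)%N -> (j < size L)%N -> i <> j -> nth D L i <> nth D L j
    & forall i, (i < n)%N -> maxs (f i) -> f i x -> exists j, (j < size L)%N /\ f i = nth D L j].
  exists L; split=> // P mP Px; have [i [ni eP]] := fP P mP Px.
  by subst P; apply: Lf.
elim: n {fP} => [|n [L [Lmax Luniq Lf]]]; first by exists [::]; split.
case: (EM [/\ maxs (f n), f n x & forall j, (j < size L)%N -> nth D L j <> f n]).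
  case=> mf fx nf; exists (f n :: L); split.
  - by case=> [|i] /= si; [split|apply: Lmax].
  - case=> [|i] [|j] //= si sj ij; [exact/nesym/nf|exact: nf|].
    by apply: Luniq => // e; apply: ij; rewrite e.
  - move=> i; rewrite ltnS leq_eqVlt => /predU1P [->|ni] mi xi; first by exists 0%N.
    by have [j [sj e]] := Lf i ni mi xi; exists j.+1.
move=> nnew; exists L; split=> // i; rewrite ltnS leq_eqVlt => /predU1P [->|ni] mi xi.
  apply: contrapT => nex; apply: nnew; split=> // j sj e; apply: nex; by exists j.
exact: Lf.
Qed.

Lemma gen_locdvd_den P f l : prime_ideal D P -> (forall a, a \in l -> locdvd P f a) ->
  exists s, [/\ D s, ~ P s & forall y, gen D l y -> principal D f (s * y)].
Proof.
move=> pP; elim: l => [|a l IH] fl.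
  exists 1; split; [exact: D1|exact: prime_not1|].
  by move=> y /= ->; rewrite mulr0; exact: submod0 (principal_submod f).
have [s [Ds nPs sl]] := IH (fun b lb => fl b (mem_behead (s := a :: l) lb)).
have [_ [[c [r [Dc Dr nPr ->]]] ea]] := fl a (mem_head _ _).
have r0 := prime_neq0 pP nPr.
exists (r * s); split; [exact: DM|exact: prime_notM|].
move=> _ /= [d [y [Dd ly ->]]]; have [d' [Dd' e']] := sl y ly.
exists (s * d * c + r * d'); split; first by apply: DD; apply: DM => //; apply: DM.
rewrite ea; transitivity (s * d * c * f + r * (s * y)); first by field; rewrite r0.
by rewrite e'; ring.
Qed.

Lemma gen_locdvd_min P (l : seq K) : maxs P -> (exists2 a, a \in l & a != 0) ->
  exists f, [/\ f \in l, f != 0 & forall a, a \in l -> locdvd P f a].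
Proof.
move=> mP; have pP := max_star_prime mP; elim: l => [|a l IH] nzl; first by case: nzl.
case: (EM (exists2 b, b \in l & b != 0)) => [/IH [f [fl f0 lf]]|l0].
  case: (gkd_locdvd_total f a mP) => fa.
    by exists f; rewrite inE fl orbT; split=> // b; rewrite inE => /predU1P [->|/lf].
  case: (eqVneq a 0) => [a0|a0].
    exists f; rewrite inE fl orbT; split=> // b; rewrite inE => /predU1P [->|/lf //].
    by rewrite a0; exact: locdvd0.
  exists a; rewrite mem_head; split=> // b; rewrite inE => /predU1P [->|/lf lb].
    exact: locdvd_refl.
  exact: (locdvd_trans pP fa lb).
have b0 b : b \in l -> b = 0 by move=> lb; apply: contrapT => /eqP b0; apply: l0; exists b.
case: nzl => b; rewrite inE => /predU1P [->|/b0 ->] b0'; last by case/eqP: b0'.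
exists a; rewrite mem_head; split=> // c; rewrite inE => /predU1P [->|/b0 ->].
  exact: locdvd_refl.
exact: locdvd0.
Qed.

(* Locally at each maximal [Q], [gen l] is principal, generated by its [D_Q]-minimal element [f]. *)
Lemma gkd_star_invertible J : finite_type D star J -> star_invertible D star J.
Proof.
move=> [_ [F [fF [l eF] ->]]]; subst F.
pose M := mulI (star (gen D l)) (inv_ideal D (star (gen D l))).
have MD : subset_K M D.
  by apply: mulI_sub => [|a b la lb]; [exact: submod_D|rewrite mulrC; apply: lb].
have fM : frac M.
  apply: frac_integral => //; first exact/mulI_submod/star_submod.
  have [a [a0 la]] := frac_nonzero (star_frac fF).
  case: (star_frac fF) => _ _ [d [Dd d0 ld]].
  by exists (a * d); split; [exact: mulf_neq0|exact: mulI_mul].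
apply: submod_eqD; [exact: star_submod|exact: star_integral|].
apply: star_local_global fM _ => Q mQ; have pQ := max_star_prime mQ.
have [y [y0 ly]] := frac_nonzero fF.
have [f [fl f0 lf]] := gen_locdvd_min mQ (gen_nonzero ly y0).
have [s [Ds nQs sl]] := gen_locdvd_den pQ lf.
have s0 := prime_neq0 pQ nQs.
exists s; split=> //; rewrite mulr1 -[s](divfK f0) mulrC.
apply: mulI_mul; first exact: (star_ext fF (gen_mem fl)).
have sf0 : s / f != 0 by rewrite mulf_neq0 ?invr_eq0.
move=> z; apply: (star_mul_sub sf0 fF frac_D starD) => w lw.
have [d [Dd e]] := sl w lw.
by have -> : s / f * w = d by rewrite mulrAC e; field; rewrite f0.
Qed.

Section Factors.
Variable x : K.
Hypothesis Dx : D x.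
Hypothesis x0 : x != 0.
Variable L : seq (K -> Prop).
Hypothesis L_max : forall i, (i < size L)%N -> maxs (nth D L i) /\ nth D L i x.
Hypothesis L_uniq :
  forall i j, (i < size L)%N -> (j < size L)%N -> i <> j -> nth D L i <> nth D L j.
Hypothesis L_all : forall P, maxs P -> P x -> exists j, (j < size L)%N /\ P = nth D L j.

Local Notation m := (size L).
Local Notation Pn i := (nth D L i).

Lemma Pn_prime i : (i < m)%N -> prime_ideal D (Pn i).
Proof. by move/L_max => [/max_star_prime]. Qed.

Lemma sep_exists i j : exists c, [/\ D c, (i < m)%N -> locdvd (Pn i) x c &
  (i < m)%N -> (j < m)%N -> j <> i -> ~ Pn j c].
Proof.
case: (EM [/\ (i < m)%N, (j < m)%N & j <> i]) => [[si sj ji]|nij]; last first.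
  exists x; split=> // [si|si sj ji]; first exact: (locdvd_refl (Pn_prime si)).
  by case: nij.
have [mi xi] := L_max si; have [mj xj] := L_max sj.
have [c [Pic nPjc]] := max_star_sep mi mj (L_uniq si sj (nesym ji)).
have [_ _ PiD _] := max_star_props mi.
have [k xck] := gkd_locdvd_exp mi xi x0 Pic.
exists (c ^+ k); split=> //; first exact/DX/PiD.
by move=> _ _ _; exact: (prime_notX (max_star_prime mj) (PiD c Pic) nPjc).
Qed.

Definition sep i j := sval (cid (sep_exists i j)).

Lemma sepP i j : [/\ D (sep i j), (i < m)%N -> locdvd (Pn i) x (sep i j) &
  (i < m)%N -> (j < m)%N -> j <> i -> ~ Pn j (sep i j)].
Proof. by rewrite /sep; case: cid. Qed.

(* The factor [I_i = (x, sep i j : j < m)^*]: the elements [sep i j] push [I_i]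
   out of every [P_j] but [P_i], while keeping [I_i D_{P_i} = x D_{P_i}]. *)
Definition fgens i := x :: [seq sep i j | j <- iota 0 m].
Definition fmod i := gen D (fgens i).
Definition fideal i := star (fmod i).

Lemma fgens_D i a : a \in fgens i -> D a.
Proof. by rewrite inE => /predU1P [->|/mapP [j _ ->]] //; case: (sepP i j). Qed.

Lemma fgens_locdvd i a : (i < m)%N -> a \in fgens i -> locdvd (Pn i) x a.
Proof.
move=> si; rewrite inE => /predU1P [->|/mapP [j _ ->]]; first exact/locdvd_refl/Pn_prime.
by case: (sepP i j) => _ /(_ si).
Qed.

Lemma fmod_x i : fmod i x. Proof. exact/gen_mem/mem_head. Qed.

Lemma fmod_sep i j : (j < m)%N -> fmod i (sep i j).
Proof. by move=> sj; apply: gen_mem; rewrite inE map_f ?orbT // mem_iota. Qed.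

Lemma fmod_frac i : frac (fmod i).
Proof. by apply: gen_frac; [exact: fgens_D|exists x; split=> //; exact: fmod_x]. Qed.

Lemma fmod_sub i : subset_K (fmod i) (fideal i). Proof. exact/star_ext/fmod_frac. Qed.

Lemma fideal_integral i : subset_K (fideal i) D.
Proof. by apply: star_integral; [exact: fmod_frac|apply: gen_integral; exact: fgens_D]. Qed.

Lemma fideal_den i : (i < m)%N ->
  exists s, [/\ D s, ~ Pn i s & forall y, fideal i y -> principal D x (s * y)].
Proof.
move=> si; have pP := Pn_prime si.
have [s [Ds nPs sx]] := gen_locdvd_den pP (fun a => @fgens_locdvd i a si).
exists s; split=> //.
exact: (star_mul_sub (prime_neq0 pP nPs) (fmod_frac i) (principal_frac Dx x0) (star_principal Dx x0)).
Qed.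

Lemma fideal_max_unique i P : (i < m)%N -> maxs P -> subset_K (fideal i) P -> P = Pn i.
Proof.
move=> si mP sP; have [j [sj ePj]] := L_all mP (sP _ (fmod_sub (fmod_x i))).
case: (eqVneq j i) => [<-//|/eqP ji]; exfalso.
have [_ _ /(_ si sj ji)] := sepP i j; apply; rewrite -ePj.
exact/sP/fmod_sub/fmod_sep.
Qed.

Lemma fideal_avoid i Q : (i < m)%N -> maxs Q -> Q <> Pn i ->
  exists g, [/\ D g, ~ Q g & fmod i g].
Proof.
move=> si mQ Qi; case: (EM (Q x)) => Qx; last by exists x; split=> //; exact: fmod_x.
have [j [sj eQj]] := L_all mQ Qx.
have ji : j <> i by move=> eji; apply: Qi; rewrite eQj eji.
exists (sep i j); split; [by case: (sepP i j)| |exact: fmod_sep].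
by rewrite eQj; case: (sepP i j) => _ _; apply.
Qed.

Lemma fideal_pis i : (i < m)%N -> pis (fideal i).
Proof.
move=> si; have pP := Pn_prime si.
apply/pisP; split; [exact/star_frac/fmod_frac|exact/star_idem/fmod_frac|exact: fideal_integral|].
move=> I1; have [s [Ds nPs sx]] := fideal_den si; have [d [Dd e]] := sx 1 I1.
by apply: nPs; rewrite -(mulr1 s) e; apply: submodM (prime_submod pP) Dd _; case: (L_max si).
Qed.

Lemma fideal_homog i : (i < m)%N -> star_homog D star (fideal i).
Proof.
move=> si; have [mi _] := L_max si; have [fP SP _ nP] := max_star_props mi.
split; [exact: fideal_pis|exact/finite_type_gen/fmod_frac|].
move=> A B pA _ pB _ IA IB AB.
have [QA mQA AQA] := max_star_above pA; have [QB mQB BQB] := max_star_above pB.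
have eA := fideal_max_unique si mQA (fun y Iy => AQA y (IA y Iy)).
have eB := fideal_max_unique si mQB (fun y Iy => BQB y (IB y Iy)).
subst QA QB; case/pisP: pA => fA _ sA _; case/pisP: pB => fB _ sB _.
have fAB : frac (sumI A B) by apply: sumI_frac => //; exact: frac_submod.
apply: nP; rewrite -SP; apply: (star_mono fAB fP); last by rewrite AB; exact: D1.
by move=> _ [a [b [Aa Bb ->]]]; apply: submodD (frac_submod fP) (AQA a Aa) (BQB b Bb).
Qed.

Lemma fideal_sh1 i : (i < m)%N -> star_super_homog_type1 D star (fideal i).
Proof.
move=> si; have [mi xi] := L_max si; have pP := Pn_prime si.
have [_ _ PD _] := max_star_props mi.
have hom := fideal_homog si.
split; first by split=> // J ftJ _; exact: gkd_star_invertible.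
split=> // M mM IM y My y0; rewrite (fideal_max_unique si mM IM) in My *.
have [k xyk] := gkd_locdvd_exp mi xi x0 My.
exists k.+1; split=> // z Dz [t [lt ez]].
have xz : locdvd (Pn i) x z.
  apply: (locdvd_trans pP xyk); exists (y * t); split; last by rewrite ez exprS mulrCA mulrA.
  by apply: (locM pP) => //; apply: (loc_of_D pP); exact: PD.
apply: (star_local_global (fmod_frac i)) => Q mQ; case: (EM (Q = Pn i)) => [->|Qi].
  have [s [Ds nPs [a [Da e]]]] := locdvd_den pP xz.
  by exists s; split=> //; rewrite e; apply: submodMr (gen_submod _) Da (fmod_x i).
have [g [Dg nQg ig]] := fideal_avoid si mQ Qi.
by exists g; split=> //; apply: submodMr (gen_submod _) Dz ig.
Qed.

Local Notation fprod a n := (prodI D [seq fideal k | k <- iota a n]).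

Lemma fprod_props a n : [/\ submod (fprod a n), subset_K (fprod a n) D & frac (fprod a n)].
Proof.
elim: n a => [|n IH] a /=; first by split=> //; [exact: submod_D|exact: frac_D].
have [_ sD fs] := IH a.+1.
split; [exact/mulI_submod/star_submod/fmod_frac|exact: mulI_integral (@fideal_integral a) sD|].
by apply: mulI_frac => //; [exact/star_frac/fmod_frac|exact: fideal_integral].
Qed.

Lemma fprod_x a n : fprod a n (x ^+ n).
Proof.
elim: n a => [|n IH] a /=; first by rewrite expr0; exact: D1.
by rewrite exprS; apply: mulI_mul; [exact/fmod_sub/fmod_x|exact: IH].
Qed.

Lemma fprod_avoid j a n : (j < m)%N -> (a + n <= m)%N -> (j < a)%N ->
  exists s, [/\ D s, ~ Pn j s & fprod a n s].
Proof.
move=> sj; have pj := Pn_prime sj.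
elim: n a => [|n IH] a anm ja /=.
  by exists 1; split; [exact: D1|exact: prime_not1|exact: D1].
have [s [Ds nPs ss]] := IH a.+1 ltac:(lia) (ltnW ja).
have [Dsep _ nPsep] := sepP a j.
exists (sep a j * s); split; [exact: DM| |].
  by apply: prime_notM => //; apply: nPsep => //; [lia|move=> eja; rewrite eja ltnn in ja].
by apply: mulI_mul => //; apply/fmod_sub/fmod_sep.
Qed.

Lemma fprod_at j a n : (j < m)%N -> (a + n <= m)%N -> (a <= j < a + n)%N ->
  exists s, [/\ D s, ~ Pn j s & fprod a n (s * x)].
Proof.
move=> sj; have pj := Pn_prime sj.
elim: n a => [|n IH] a anm /andP [aj jan]; first by rewrite addn0 ltnNge aj in jan.
case: (eqVneq a j) => [eaj|aj'] /=.
  subst j; have [s [Ds nPs ss]] := fprod_avoid (a := a.+1) (n := n) sj ltac:(lia) (ltnSn a).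
  by exists s; split=> //; rewrite mulrC; apply: mulI_mul => //; exact/fmod_sub/fmod_x.
have aj1 : (a < j)%N by rewrite ltn_neqAle aj' aj.
have [s [Ds nPs ss]] := IH a.+1 ltac:(lia) ltac:(apply/andP; lia).
have [Dsep _ nPsep] := sepP a j.
exists (sep a j * s); split; [exact: DM| |].
  by apply: prime_notM => //; apply: nPsep; [lia|lia|move=> eja; rewrite eja eqxx in aj'].
by rewrite -mulrA; apply: mulI_mul => //; apply/fmod_sub/fmod_sep.
Qed.

Lemma fprod_den j a n : (j < m)%N -> (a + n <= m)%N -> (a <= j < a + n)%N ->
  exists s, [/\ D s, ~ Pn j s & forall y, fprod a n y -> principal D x (s * y)].
Proof.
move=> sj; elim: n a => [|n IH] a anm /andP [aj jan]; first by rewrite addn0 ltnNge aj in jan.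
have [_ sD _] := fprod_props a.+1 n.
have hx s : submod (fun t => principal D x (s * t)).
  exact/submod_scale/principal_submod.
case: (eqVneq a j) => [eaj|aj'] /=.
  subst j; have [s [Ds nPs sx]] := fideal_den sj.
  exists s; split=> //; apply: mulI_sub => // u v Iu pv.
  by rewrite mulrA; apply: submodMr (principal_submod x) (sD v pv) (sx u Iu).
have aj1 : (a < j)%N by rewrite ltn_neqAle aj' aj.
have [s [Ds nPs sx]] := IH a.+1 ltac:(lia) ltac:(apply/andP; lia).
exists s; split=> //; apply: mulI_sub => // u v Iu pv.
by rewrite mulrCA; apply: submodM (principal_submod x) (fideal_integral Iu) (sx v pv).
Qed.

Lemma principal_fprod : principal D x = star (fprod 0 m).
Proof.
have [hp pD fp] := fprod_props 0 m.
rewrite predeqE => y; split.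
  case=> d [Dd ->]; apply: submodM (star_submod fp) Dd _.
  apply: star_local_global fp _ => Q mQ; case: (EM (Q x)) => Qx.
    by have [j [sj ->]] := L_all mQ Qx; apply: fprod_at.
  exists (x ^+ m); split; [exact: DX|exact: (prime_notX (max_star_prime mQ) Dx Qx)|].
  by apply: submodMr hp Dx (fprod_x 0 m).
rewrite -(star_principal Dx x0); apply: star_mono => //; first exact: principal_frac.
move=> z pz; rewrite -(star_principal Dx x0); apply: star_local_global (principal_frac Dx x0) _.
move=> Q mQ; case: (EM (Q x)) => Qx.
  have [j [sj ->]] := L_all mQ Qx.
  by have [s [Ds nPs sx]] := fprod_den (a := 0) (n := m) sj (leqnn _) sj; exists s; split=> //; apply: sx.
by exists x; split=> //; exists z; split; [exact: pD|rewrite mulrC].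
Qed.

End Factors.

Lemma gkd_sh1_factorization : sh1_factorization.
Proof.
move=> x Dx x0 _; have [L [Lmax Luniq Lall]] := max_star_ideals_enum Dx x0.
exists [seq fideal Dx x0 Lmax Luniq k | k <- iota 0 (size L)].
split; last exact: principal_fprod.
move=> i; rewrite size_map size_iota => si.
by rewrite (nth_map 0%N) ?size_iota // nth_iota // add0n; apply: fideal_sh1.
Qed.

End GKD.

Lemma sh1_factorization_iff_GKD : sh1_factorization <-> star_GKD D star.
Proof. by split; [exact: sh1_factorization_GKD|exact: gkd_sh1_factorization]. Qed.

End StarGKD.

Unset Implicit Arguments.

Theorem propositionQ5 (K : fieldType) (D : K -> Prop)
  (star : (K -> Prop) -> (K -> Prop)) :
  is_subring D -> is_frac_field D ->
  is_star_op D star -> finite_character D star ->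
  ((forall x : K, D x -> x != 0 -> ~ D x^-1 ->
      exists s : seq (K -> Prop),
        (forall i : nat, (i < size s)%N -> star_super_homog_type1 D star (nth D s i)) /\
        principal D x = star (prodI D s))
   <-> star_GKD D star).
Proof. exact: sh1_factorization_iff_GKD. Qed.
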